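(* Let $n \ge 2$. The minimum length of a solution to the $(n-1)$-out-of-$n$ picture-hanging puzzle on the nails $\{1,\dots,n\}$ is exactly $2n$, and this minimum is attained by the word \[ 1 + 2 + \cdots + n - 1 - 2 - \cdots - n. \]
   Context: Words are elements of the free group $F(V)$ on a finite set $V$ of generators (''nails''), written additively: $+$ is the (non-commutative) group operation, $-x$ the inverse, $0$ the identity (empty word); so $1+2+\cdots+n-1-2-\cdots-n$ denotes $x_1x_2\cdots x_n x_1^{-1}x_2^{-1}\cdots x_n^{-1}$. The length of an element is the number of letters (generators with sign) in its freely reduced word. For $S \subseteq V$, $w|_S$ denotes the image of $w$ under the homomorphism sending each generator in $S$ to $0$ and fixing the others. For $0 \le k \le n$ and $V=\{1,\dots,n\}$, a solution to the $k$-out-of-$n$ picture-hanging puzzle is a word $w \in F(V)$ such that for every $S \subseteq V$: $w|_S = 0$ if and only if $|S| \ge k$. *)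

(* Free group F({1..n}) modelled by words over letters
   ('I_n * bool): ordinal i stands for nail i+1, the boolean is the sign
   (true = +, false = -). A word denotes a group element; two words denote
   the same element iff their free reductions coincide. *)
From mathcomp Require Import all_boot.
Set Implicit Arguments. Unset Strict Implicit. Unset Printing Implicit Defensive.

Definition letter (n : nat) : Type := ('I_n * bool)%type.

Definition inv_letters n (x y : letter n) : bool := (x.1 == y.1) && (x.2 != y.2).

Definition freduce n (w : seq (letter n)) : seq (letter n) :=
  foldr (fun x acc => match acc with
                      | y :: t => if inv_letters x y then t else x :: acc
                      | [::] => [:: x]
                      end) [::] w.

Definition glength n (w : seq (letter n)) : nat := size (freduce w).

Definition restrict_trivial n (w : seq (letter n)) (S : {set 'I_n}) : bool :=
  freduce [seq x <- w | x.1 \notin S] == [::].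

Definition is_solution n (k : nat) (w : seq (letter n)) : Prop :=
  forall S : {set 'I_n}, restrict_trivial w S <-> k <= #|S|.

Definition commutator_word n : seq (letter n) :=
  [seq (i, true) | i <- enum 'I_n] ++ [seq (i, false) | i <- enum 'I_n].

(* Deleting nails commutes with free reduction, so w|_S is trivial iff
   (freduce w)|_S is.  If w solves the (n-1)-out-of-n puzzle, every nail i
   occurs at least twice in the reduced word of w: keeping only nail i must
   give the identity, which a single occurrence forbids, and if i did not occur
   at all then keeping the two nails {i, j} would act like keeping j alone
   and so be trivial, although only n-2 nails were deleted.  Summing over the
   nails gives length >= 2n.  Conversely the commutator word is reduced, and
   deleting all but at least two of its nails leaves a reduced nonempty word. *)

From mathcomp Require Import all_boot zify.
Set Implicit Arguments. Unset Strict Implicit. Unset Printing Implicit Defensive.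

Arguments freduce : simpl never.

Lemma size_filter_enum (T : finType) (p : pred T) : size [seq x <- enum T | p x] = #|p|.
Proof. by rewrite cardE /enum_mem filter_predT. Qed.

Section FreeReduction.
Variable n : nat.
Implicit Types (x y z : letter n) (w r : seq (letter n)) (S : {set 'I_n}).

Definition reduce_step x r : seq (letter n) :=
  if r is y :: t then (if inv_letters x y then t else x :: r) else [:: x].

Lemma freduce_cons x w : freduce (x :: w) = reduce_step x (freduce w).
Proof. by []. Qed.

Definition reduced w : bool :=
  if w is x :: t then path [rel y z | ~~ inv_letters y z] x t else true.

Lemma reduced_behead x r : reduced (x :: r) -> reduced r.
Proof. by case: r => //= y r /andP[]. Qed.

Lemma reduced_reduce_step x r : reduced r -> reduced (reduce_step x r).
Proof.
case: r => [|y r] //= red_yr; case: ifP => [_ | /negbT xy] /=.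
  exact: reduced_behead red_yr.
by rewrite xy.
Qed.

Lemma reduced_freduce w : reduced (freduce w).
Proof. by elim: w => [|x w IHw] //; rewrite freduce_cons reduced_reduce_step. Qed.

Lemma freduce_id w : reduced w -> freduce w = w.
Proof.
elim: w => [|x w IHw] // red_xw.
rewrite freduce_cons IHw ?(reduced_behead red_xw) //.
by case: w red_xw {IHw} => //= y w /andP[/negbTE ->].
Qed.

Lemma inv_letters_eq x y z : inv_letters x y -> inv_letters y z -> x = z.
Proof.
case: x y z => [a b] [c d] [e f] /andP[/= /eqP-> bd] /andP[/= /eqP-> df].
by congr pair; move: bd df; case: b; case: d; case: f.
Qed.

Lemma reduce_stepK x y r :
  inv_letters x y -> reduced r -> reduce_step x (reduce_step y r) = r.
Proof.
move=> xy; case: r => [|z r] /=; first by rewrite xy.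
case: ifP => [yz | _ _] /=; last by rewrite xy.
by rewrite -(inv_letters_eq xy yz); case: r => //= u r /andP[/negbTE ->].
Qed.

Lemma freduce_filter_freduce (q : pred 'I_n) w :
  freduce [seq x <- freduce w | q x.1] = freduce [seq x <- w | q x.1].
Proof.
elim: w => [|x w IHw] //=.
rewrite (fun_if (@freduce n)) !freduce_cons -IHw.
case: (freduce w) => [|y r] /=; first by case: (q x.1).
case: ifP => xy /=; last by case: (q x.1).
have -> : q y.1 = q x.1 by case/andP: xy => /eqP ->.
case: (q x.1) => //.
by rewrite freduce_cons reduce_stepK ?reduced_freduce.
Qed.

Lemma restrict_trivial_freduce w S :
  restrict_trivial (freduce w) S = restrict_trivial w S.
Proof. by rewrite /restrict_trivial (freduce_filter_freduce (fun i => i \notin S)). Qed.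

End FreeReduction.

Section CommutatorWord.
Variable n : nat.
Implicit Types (L : seq 'I_n) (S : {set 'I_n}).

Definition comm_word (L : seq 'I_n) : seq (letter n) :=
  [seq (i, true) | i <- L] ++ [seq (i, false) | i <- L].

Lemma commutator_wordE : commutator_word n = comm_word (enum 'I_n).
Proof. by []. Qed.

Lemma size_comm_word L : size (comm_word L) = 2 * size L.
Proof. by rewrite size_cat !size_map mul2n addnn. Qed.

Lemma filter_comm_word (q : pred 'I_n) L :
  [seq x <- comm_word L | q x.1] = comm_word [seq i <- L | q i].
Proof. by rewrite /comm_word filter_cat !filter_map. Qed.

Lemma path_same_sign (a : 'I_n) b L :
  path [rel y z | ~~ inv_letters y z] (a, b) [seq (i, b) | i <- L].
Proof. by elim: L a => [|c L IHL] a //=; rewrite IHL /inv_letters eqxx andbF. Qed.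

Lemma reduced_comm_word L : uniq L -> 1 < size L -> reduced (comm_word L).
Proof.
case: L => [|a [|b L]] //= /andP[a_notin _] _.
rewrite cat_path path_same_sign /= last_map path_same_sign /inv_letters /= !andbF /= !andbT.
by apply: contraNneq a_notin => <-; apply: mem_last.
Qed.

Lemma freduce_comm_word_eq0 L :
  uniq L -> (freduce (comm_word L) == [::]) = (size L <= 1).
Proof.
case: (leqP (size L) 1) => [|L_gt1 uL].
  by case: L => [|a []] //= _ _; rewrite !freduce_cons /= /inv_letters eqxx.
by rewrite freduce_id ?reduced_comm_word //; case: L L_gt1 {uL}.
Qed.

Lemma restrict_trivial_commutator_word S :
  restrict_trivial (commutator_word n) S = (n.-1 <= #|S|).
Proof.
rewrite /restrict_trivial commutator_wordE (filter_comm_word (fun i => i \notin S)).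
rewrite freduce_comm_word_eq0 ?(filter_uniq _ (enum_uniq _)) // size_filter_enum.
rewrite (@eq_card _ (fun i => i \notin S) (~: S)) => [|i]; last by rewrite inE.
have := cardsC S; rewrite card_ord; lia.
Qed.

Lemma glength_commutator_word : 1 < n -> glength (commutator_word n) = 2 * n.
Proof.
move=> n_gt1; rewrite /glength commutator_wordE freduce_id.
  by rewrite size_comm_word size_enum_ord.
by rewrite reduced_comm_word ?enum_uniq ?size_enum_ord.
Qed.

Lemma commutator_word_solution : is_solution n.-1 (commutator_word n).
Proof. by move=> S; rewrite restrict_trivial_commutator_word. Qed.

End CommutatorWord.

Section LowerBound.
Variable n : nat.
Implicit Types (i : 'I_n) (w : seq (letter n)) (S : {set 'I_n}).

Definition at_nail (i : 'I_n) : pred (letter n) := fun x => x.1 == i.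

Lemma size_sum_count_at_nail w : size w = \sum_(i < n) count (at_nail i) w.
Proof.
elim: w => [|x w IHw] /=; first by rewrite big1.
rewrite big_split /= -IHw (bigD1 x.1) //= /at_nail eqxx big1 // => i /negbTE.
by rewrite eq_sym => ->.
Qed.

Lemma restrict_trivial_setU1_absent i S w :
  count (at_nail i) w = 0 -> restrict_trivial w (i |: S) = restrict_trivial w S.
Proof.
move/eqP; rewrite -leqn0 leqNgt -has_count => /hasPn no_i.
rewrite /restrict_trivial (eq_in_filter (a2 := fun x => x.1 \notin S)) // => x /no_i.
by rewrite in_setU1 /at_nail => /negbTE ->.
Qed.

Lemma restrict_trivial_single_occurrence i w :
  count (at_nail i) w = 1 -> ~~ restrict_trivial w [set~ i].
Proof.
rewrite -size_filter /restrict_trivial.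
rewrite (eq_filter (a2 := at_nail i)) => [|x]; last by rewrite !inE negbK.
by case: [seq x <- w | at_nail i x] => [|x []].
Qed.

Lemma solution_count_at_nail w i :
  1 < n -> is_solution n.-1 w -> 1 < count (at_nail i) (freduce w).
Proof.
move=> n_gt1 sol_w.
have trivialE S : restrict_trivial (freduce w) S = (n.-1 <= #|S|).
  by rewrite restrict_trivial_freduce; apply/idP/idP => /sol_w.
have card_setC1 (j : 'I_n) : #|[set~ j]| = n.-1 by rewrite cardsC1 card_ord.
case count_i: (count _ _) => [|[|c]] //.
- have [j j_neq_i] : exists j : 'I_n, j != i.
    have /card_gt0P[j] : 0 < #|[set~ i]| by rewrite card_setC1; lia.
    by rewrite !inE; exists j.
  have := trivialE [set~ j]; rewrite card_setC1 leqnn.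
  have -> : [set~ j] = i |: ~: [set i; j].
    apply/setP => k; rewrite !inE.
    by case: (eqVneq k i) => [->|_] //; rewrite eq_sym j_neq_i.
  rewrite restrict_trivial_setU1_absent // trivialE.
  suff -> : #|~: [set i; j]| = n - 2 by lia.
  by have := cardsC [set i; j]; rewrite card_ord cards2 eq_sym j_neq_i /=; lia.
- have := trivialE [set~ i]; rewrite card_setC1 leqnn.
  by rewrite (negbTE (restrict_trivial_single_occurrence count_i)).
Qed.

Lemma solution_glength_ge w : 1 < n -> is_solution n.-1 w -> 2 * n <= glength w.
Proof.
move=> n_gt1 sol_w; rewrite /glength size_sum_count_at_nail.
apply: (@leq_trans (\sum_(i < n) 2)); first by rewrite sum_nat_const card_ord mulnC.
by apply: leq_sum => i _; apply: solution_count_at_nail.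
Qed.

End LowerBound.

Theorem proposition2 (n : nat) (hn : 2 <= n) :
  is_solution n.-1 (commutator_word n) /\
  glength (commutator_word n) = 2 * n /\
  (forall w : seq (letter n), is_solution n.-1 w -> 2 * n <= glength w).
Proof.
split; first exact: commutator_word_solution.
split; first exact: glength_commutator_word.
by move=> w; apply: solution_glength_ge.
Qed.
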